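(* Let $r \in \mathbb{Q}_{>0}$ be such that $S_r$ is atomic. Then the set of elasticities $R(S_r)$ is dense in $\mathbb{R}_{\ge 1}$ if and only if $r \in \mathbb{Q}_{>1} \setminus \mathbb{N}$.
   Context: For $q \in \mathbb{Q}_{>0}$, $\mathsf{n}(q),\mathsf{d}(q)$ are the positive coprime integers with $q = \mathsf{n}(q)/\mathsf{d}(q)$. $S_r$ is the additive submonoid of $(\mathbb{Q}_{\ge 0},+)$ generated by $\{r^n : n \in \mathbb{N}_0\}$; it is atomic exactly when $r=1$ or $\mathsf{n}(r)>1$. $\mathsf{L}(x)$ denotes the set of lengths of factorizations of $x$ into atoms. The elasticity of $x \ne 0$ is $\rho(x) = \sup \mathsf{L}(x)/\inf \mathsf{L}(x) \in \mathbb{Q}_{\ge 1}\cup\{\infty\}$, $\rho(0)=1$, and $R(S_r) = \{\rho(x) : x \in S_r\}$ (density is understood for $R(S_r) \setminus \{\infty\}$ as a subset of $\mathbb{R}_{\ge 1}$). *)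

From HB Require Import structures.
From mathcomp Require Import all_boot all_order all_algebra.
From Stdlib Require Reals ZArith.
Set Implicit Arguments. Unset Strict Implicit. Unset Printing Implicit Defensive.
Import Order.TTheory GRing.Theory Num.Theory.
Local Open Scope ring_scope.

Definition in_S (r x : rat) : Prop := exists s : seq nat, x = \sum_(n <- s) r ^+ n.

(* atoms of S_r: non-units (i.e. nonzero, the monoid being reduced) that do
   not split as a sum of two nonzero elements of S_r *)
Definition atom (r a : rat) : Prop :=
  in_S r a /\ a != 0 /\
  forall b c, in_S r b -> in_S r c -> a = b + c -> b = 0 \/ c = 0.

Definition is_factorization (r x : rat) (s : seq rat) : Prop :=
  (forall a, a \in s -> atom r a) /\ x = \sum_(a <- s) a.

Definition in_L (r x : rat) (l : nat) : Prop :=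
  exists s, is_factorization r x s /\ size s = l.

Definition atomic (r : rat) : Prop :=
  forall x, in_S r x -> x != 0 -> exists s, is_factorization r x s.

(* q \in R(S_r) \ {infinity}: q = rho(x) < infinity for some x in S_r *)
Definition finite_elasticity (r q : rat) : Prop :=
  exists x, in_S r x /\
    ((x = 0 /\ q = 1) \/
     (x != 0 /\ exists lo hi : nat,
        [/\ in_L r x lo, in_L r x hi,
            (forall l, in_L r x l -> (lo <= l <= hi)%N) &
            q = hi%:R / lo%:R])).

Definition int_to_Z (z : int) : BinInt.Z :=
  match z with
  | Posz n => BinInt.Z.of_nat n
  | Negz n => BinInt.Z.opp (BinInt.Z.of_nat n.+1)
  end.

Definition rat_to_R (q : rat) : Rdefinitions.R :=
  Rdefinitions.Rdiv (Rdefinitions.IZR (int_to_Z (numq q)))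
                    (Rdefinitions.IZR (int_to_Z (denq q))).

Definition dense_in_R_ge1 (E : rat -> Prop) : Prop :=
  forall p eps : Rdefinitions.R,
    Rdefinitions.Rle (Rdefinitions.IZR (BinNums.Zpos BinNums.xH)) p ->
    Rdefinitions.Rlt (Rdefinitions.IZR BinNums.Z0) eps ->
    exists q, E q /\
      Rdefinitions.Rlt (Rbasic_fun.Rabs (Rdefinitions.Rminus (rat_to_R q) p)) eps.

(* Write [r = A / B] in lowest terms.  Elements of [S_r] are sums of powers of [r],
   i.e. exponent multisets, and [A * r ^ k = B * r ^ k.+1] trades [A] copies of [r ^ k]
   for [B] copies of [r ^ k.+1].  Clearing denominators turns a sum of powers into a
   mixed-radix number whose digits are the multiplicities of the exponents, so an
   [A]-reduced expansion (every exponent occurring fewer than [A] times) and a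
   [B]-reduced one (every positive exponent fewer than [B] times) are unique up to
   order.
   For [r < 1] trading up lengthens factorizations without bound, so an element of
   finite elasticity has only such [A]-reduced factorizations, all of one length; for
   integral [r] the only atom is [1].  For [r > 1] not integral the powers of [r] are
   the atoms, the [A]-reduced and [B]-reduced expansions have the least and greatest
   lengths, and [K * A ^ m + r ^ H + ... + r ^ (H + s - 1)] has elasticity
   [(K * A ^ m + s) / (g + s)] with [g <= K * B ^ m]; these ratios are dense. *)

From HB Require Import structures.
From mathcomp Require Import all_boot all_order all_algebra.
From mathcomp Require Import zify ring.
Set Implicit Arguments. Unset Strict Implicit. Unset Printing Implicit Defensive.
Import Order.TTheory GRing.Theory Num.Theory.

Lemma coprime_digit_eq A X c d Y Y' : coprime A X -> c < A -> d < A ->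
  c * X + A * Y = d * X + A * Y' -> c = d.
Proof.
wlog le_cd : c d Y Y' / c <= d.
  move=> wlog_le cAX cA dA E; case: (leqP c d) => [le_cd|/ltnW le_dc].
    exact: wlog_le E.
  by apply/esym; apply: wlog_le (esym E).
move=> cAX _ dA E.
have : A %| (d - c) * X.
  apply/dvdnP; exists (Y - Y'); rewrite !mulnBl [Y * A]mulnC [Y' * A]mulnC; lia.
rewrite Gauss_dvdl //; case: (posnP (d - c)) => [|/dvdn_leq le_A /le_A]; lia.
Qed.

Section MixedRadix.
Variables A B : nat.

(* [wsum c n = B ^ n.-1 * \sum_(i < n) c i * (A / B) ^ i]: clearing denominators in a
   combination of the powers of [A / B]. *)
Definition wsum (c : nat -> nat) n := \sum_(i < n) c i * A ^ i * B ^ (n - i.+1).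

Lemma wsum0 c : wsum c 0 = 0.
Proof. by rewrite /wsum big_ord0. Qed.

Lemma wsum_recl c n : wsum c n.+1 = c 0 * B ^ n + A * wsum (fun i => c i.+1) n.
Proof.
rewrite /wsum big_ord_recl /= subn1 expn0 muln1 big_distrr; congr (_ + _).
by apply: eq_bigr => i _; rewrite /bump /= add1n subSS expnS; lia.
Qed.

Lemma wsum_recr c n : wsum c n.+1 = B * wsum c n + c n * A ^ n.
Proof.
rewrite /wsum big_ord_recr /= subnn expn0 muln1 big_distrr; congr (_ + _).
apply: eq_bigr => i _; have ltin := ltn_ord i.
rewrite subSS (_ : n - i = (n - i.+1).+1); last by lia.
by rewrite expnS /=; lia.
Qed.

Hypotheses (coprimeAB : coprime A B) (A_gt0 : 0 < A) (B_gt0 : 0 < B).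

Lemma wsum_injA n c d : wsum c n = wsum d n ->
  (forall i, i.+1 < n -> c i < A /\ d i < A) -> forall i, i < n -> c i = d i.
Proof.
elim: n c d => [//|n IH] c d; rewrite !wsum_recl => E small.
have c0 : c 0 = d 0.
  case: n {IH} E small => [|n] E small.
    by move: E; rewrite !wsum0 !muln0 !addn0 expn0 !muln1.
  have [c0A d0A] := small 0 isT.
  exact: coprime_digit_eq (coprimeXr _ coprimeAB) c0A d0A E.
move: E; rewrite c0 => /addnI /eqP; rewrite eqn_pmul2l // => /eqP E.
case=> [//|i] /= lt_in.
by apply: (IH (fun i => c i.+1) (fun i => d i.+1) E) => // j lt_jn; apply: small.
Qed.

Lemma wsum_injB n c d : wsum c n = wsum d n ->
  (forall i, 0 < i -> i < n -> c i < B /\ d i < B) -> forall i, i < n -> c i = d i.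
Proof.
elim: n => [//|n IH]; rewrite !wsum_recr => E small.
have cn : c n = d n.
  case: n {IH} E small => [|n] E small.
    by move: E; rewrite !wsum0 !muln0 !add0n expn0 !muln1.
  have [cnB dnB] := small n.+1 isT (leqnn _).
  rewrite ![B * _ + _]addnC in E.
  have coprimeBA : coprime B A by rewrite coprime_sym.
  exact: coprime_digit_eq (coprimeXr _ coprimeBA) cnB dnB E.
move: E; rewrite cn => /addIn /eqP; rewrite eqn_pmul2l // => /eqP E i.
rewrite ltnS leq_eqVlt => /orP [/eqP -> //|lt_in].
by apply: IH E _ i lt_in => j j_gt0 lt_jn; apply: small => //; apply: ltnW.
Qed.

End MixedRadix.

Lemma perm_nseq_cat_of_count (e : seq nat) k c : c <= count_mem k e ->
  exists e0, perm_eq e (nseq c k ++ e0).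
Proof.
elim: c e => [|c IH] e le_ce; first by exists e.
have ke : k \in e by rewrite -has_pred1 has_count; lia.
have [|e0 perm_rem] := IH (rem k e).
  by move: le_ce; rewrite (permP (perm_to_rem ke)) /= eqxx; lia.
by exists e0; apply: perm_trans (perm_to_rem ke) _; rewrite perm_cons.
Qed.

Lemma perm_eq_count_lt (e e' : seq nat) n :
  all (fun x => x < n) e -> all (fun x => x < n) e' ->
  (forall i, i < n -> count_mem i e = count_mem i e') -> perm_eq e e'.
Proof.
move=> /allP lt_e /allP lt_e' eq_cnt; apply/allP => i _; apply/eqP.
case: (ltnP i n) => [/eq_cnt //|le_ni].
have out s : {in s, forall x, x < n} -> count_mem i s = 0.
  by move=> lt_s; apply/count_memPn/negP => /lt_s; rewrite ltnNge le_ni.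
by rewrite (out _ lt_e) (out _ lt_e').
Qed.

Lemma all_lt_sumn (e : seq nat) : all (fun x => x < (sumn e).+1) e.
Proof.
apply/allP; elim: e => [//|y e IH] x; rewrite inE => /orP [/eqP ->|/IH] /=; lia.
Qed.

Definition small_counts (A : nat) (e : seq nat) := forall k, count_mem k e < A.
Definition small_pos_counts (B : nat) (e : seq nat) :=
  forall k, 0 < k -> count_mem k e < B.

Lemma small_countsPn A (e : seq nat) : 0 < A ->
  (exists k, A <= count_mem k e) \/ small_counts A e.
Proof.
move=> A_gt0.
have [/hasP [k _ le_A]|/hasPn small] := boolP (has (fun k => A <= count_mem k e) e).
  by left; exists k.
by right=> k; have [/small|/count_memPn ->] := boolP (k \in e); rewrite // ltnNge.
Qed.

Lemma small_pos_countsPn B (e : seq nat) : 0 < B ->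
  (exists k, B <= count_mem k.+1 e) \/ small_pos_counts B e.
Proof.
move=> B_gt0.
have [/hasP [[//|k] _ /= le_B]|/hasPn small] :=
  boolP (has (fun k => (0 < k) && (B <= count_mem k e)) e).
  by left; exists k.
right=> k k_gt0; have [/small|/count_memPn ->] := boolP (k \in e) => //.
by rewrite k_gt0 -ltnNge.
Qed.

Lemma small_counts_cat_iota A f H s : 1 < A -> small_counts A f ->
  {in f, forall k, k < H} -> small_counts A (f ++ iota H s).
Proof.
move=> A_gt1 small_f lt_fH k.
rewrite count_cat (count_uniq_mem _ (iota_uniq H s)) mem_iota.
case: (ltnP k H) => [_|le_Hk]; first by rewrite addn0; apply: small_f.
rewrite (count_memPn (_ : k \notin f)) ?add0n; first by case: (k < H + s) => /=; lia.
by apply/negP => /lt_fH; rewrite ltnNge le_Hk.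
Qed.

Lemma small_pos_counts_nseq0_cat_iota B N H s : 1 < B ->
  small_pos_counts B (nseq N 0 ++ iota H s).
Proof.
move=> B_gt1 [//|k] _.
rewrite count_cat count_nseq (count_uniq_mem _ (iota_uniq H s)) /=.
by case: (_ \in _) => /=; lia.
Qed.

Lemma bernoulli_expn A B m : B <= A -> B ^ m * (B + m * (A - B)) <= A ^ m * B.
Proof.
move=> le_BA; elim: m => [|m IH]; first by rewrite !expn0 mul0n addn0.
have le_exp : B ^ m <= A ^ m by case: m {IH} => [|m]; rewrite ?expn0 ?leq_exp2r.
rewrite !expnS; move: IH le_exp; set X := B ^ m; set Y := A ^ m => IH le_exp.
have -> : A = B + (A - B) by lia.
move: (A - B) IH => d; rewrite addKn => IH.
have h1 : B * (X * (B + m * d)) <= B * (Y * B) by rewrite leq_mul2l IH orbT.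
have h2 : B * X * d <= B * Y * d by rewrite leq_mul2r leq_mul2l le_exp !orbT.
nia.
Qed.

Lemma expn_ratio_unbounded A B P : 0 < B -> B < A -> exists m, P.+1 * B ^ m <= A ^ m.
Proof.
move=> B_gt0 lt_BA; exists (P * B).
have := bernoulli_expn (P * B) (ltnW lt_BA).
set X := B ^ (P * B); set Y := A ^ (P * B) => bern.
suff : B * (P.+1 * X) <= B * Y by rewrite leq_mul2l (gtn_eqF B_gt0).
have : 1 <= A - B by lia.
nia.
Qed.

Local Open Scope ring_scope.

Lemma big_count_mem (V : nmodType) (F : nat -> V) (e : seq nat) n :
  all (fun x => x < n)%N e -> \sum_(x <- e) F x = \sum_(i < n) F i *+ count_mem (i : nat) e.
Proof.
elim: e => [|x e IH] /=; first by rewrite big_nil big1 // => i _.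
move=> /andP [lt_xn lt_e]; rewrite big_cons IH //.
under eq_bigr => i _ do rewrite mulrnDr.
rewrite big_split /=; congr (_ + _).
rewrite (bigD1 (Ordinal lt_xn)) //= eqxx mulr1n big1 ?addr0 // => i /negbTE.
by rewrite -val_eqE /= eq_sym => ->; rewrite mulr0n.
Qed.

Definition expsum (r : rat) (e : seq nat) := \sum_(k <- e) r ^+ k.

Section ExpSum.
Variable r : rat.

Lemma expsum_cons x e : expsum r (x :: e) = r ^+ x + expsum r e.
Proof. by rewrite /expsum big_cons. Qed.

Lemma expsum_seq1 k : expsum r [:: k] = r ^+ k.
Proof. exact: big_seq1. Qed.

Lemma expsum_cat e e' : expsum r (e ++ e') = expsum r e + expsum r e'.
Proof. by rewrite /expsum big_cat. Qed.

Lemma expsum_nseq c k : expsum r (nseq c k) = c%:R * r ^+ k.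
Proof.
elim: c => [|c IH]; first by rewrite /expsum big_nil mul0r.
by rewrite /= expsum_cons IH -natr1 mulrDl mul1r addrC.
Qed.

Lemma perm_expsum e e' : perm_eq e e' -> expsum r e = expsum r e'.
Proof. exact: perm_big. Qed.

Hypothesis r_gt0 : 0 < r.

Lemma expsum_ge0 e : 0 <= expsum r e.
Proof. by apply: sumr_ge0 => k _; rewrite exprn_ge0 // ltW. Qed.

Lemma expsum_gt0 e : e != [::] -> 0 < expsum r e.
Proof. by case: e => // x e _; rewrite expsum_cons ltr_wpDr ?expsum_ge0 ?exprn_gt0. Qed.

Lemma exp_lt_expsum t x : x \in t -> (1 < size t)%N -> r ^+ x < expsum r t.
Proof.
move=> xt size_t; rewrite (perm_expsum (perm_to_rem xt)) expsum_cons ltrDl.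
by apply: expsum_gt0; rewrite -size_eq0 size_rem //; lia.
Qed.

Lemma atom_exp a : atom r a -> exists k, a = r ^+ k.
Proof.
case=> [[[|x [|y t]] ->]] [a_neq0 indec]; first by rewrite big_nil eqxx in a_neq0.
  by exists x; rewrite big_seq1.
have [||||] := indec (r ^+ x) (expsum r (y :: t)).
- by exists [:: x]; rewrite big_seq1.
- by exists (y :: t).
- by rewrite big_cons.
- by move/eqP; rewrite expf_eq0 gt_eqF ?andbF.
- by move/eqP; rewrite gt_eqF ?expsum_gt0.
Qed.

Lemma atom_exp_indecomposable k :
  (forall t, (1 < size t)%N -> expsum r t != r ^+ k) -> atom r (r ^+ k).
Proof.
move=> indec; split; first by exists [:: k]; rewrite big_seq1.
split=> [|_ _ [s1 ->] [s2 ->] E]; first by rewrite expf_neq0 // gt_eqF.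
have [->|s1_nil] := eqVneq s1 [::]; first by left; rewrite big_nil.
have [->|s2_nil] := eqVneq s2 [::]; first by right; rewrite big_nil.
suff /indec : (1 < size (s1 ++ s2))%N by rewrite expsum_cat -E eqxx.
rewrite size_cat; case: s1 s1_nil {E} => // ? s1 _; case: s2 s2_nil => // ? s2 _ /=; lia.
Qed.

Lemma in_L_expsum x l : in_L r x l -> exists e, size e = l /\ expsum r e = x.
Proof.
case=> s [[atoms ->] <-]; elim: s atoms => [|a s IH] atoms.
  by exists [::]; rewrite /expsum !big_nil.
have [k ->] := atom_exp (atoms a (mem_head _ _)).
have [|e [size_e sum_e]] := IH; first by move=> b bs; apply: atoms; rewrite inE bs orbT.
by exists (k :: e); rewrite /= size_e expsum_cons sum_e big_cons.
Qed.

Lemma expsum_in_L e : (forall k, atom r (r ^+ k)) -> in_L r (expsum r e) (size e).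
Proof.
move=> atoms; exists (map (fun k => r ^+ k) e); rewrite size_map.
by split=> //; split=> [a /mapP [k _ ->] //|]; rewrite big_map.
Qed.

End ExpSum.

Section Trade.
Variables (r : rat) (A B : nat).
Hypotheses (r_eq : r = A%:R / B%:R) (B_gt0 : (0 < B)%N).

Lemma num_exp_eq_den_expS k : A%:R * r ^+ k = B%:R * r ^+ k.+1.
Proof. by rewrite exprS r_eq mulrA mulrCA divff ?mulr1 // pnatr_eq0 -lt0n. Qed.

Lemma expsum_trade (e : seq nat) k c k' c' :
  (c <= count_mem k e)%N -> c%:R * r ^+ k = c'%:R * r ^+ k' ->
  exists e', [/\ expsum r e' = expsum r e, size e' = (size e - c + c')%N
               & (c' <= count_mem k' e')%N].
Proof.
move=> /perm_nseq_cat_of_count [e0 perm_e] E; exists (nseq c' k' ++ e0); split.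
- by rewrite (perm_expsum r perm_e) !expsum_cat !expsum_nseq E.
- by rewrite (perm_size perm_e) !size_cat !size_nseq addKn addnC.
- by rewrite count_cat count_nseq /= eqxx mul1n leq_addr.
Qed.

Lemma expsum_trade_up (e : seq nat) k : (A <= count_mem k e)%N ->
  exists e', [/\ expsum r e' = expsum r e, size e' = (size e - A + B)%N
               & (B <= count_mem k.+1 e')%N].
Proof. by move=> le_A; apply: expsum_trade le_A _; apply: num_exp_eq_den_expS. Qed.

Lemma expsum_trade_down (e : seq nat) k : (B <= count_mem k.+1 e)%N ->
  exists e', [/\ expsum r e' = expsum r e, size e' = (size e - B + A)%N
               & (A <= count_mem k e')%N].
Proof. by move=> le_B; apply: expsum_trade le_B _; rewrite num_exp_eq_den_expS. Qed.

End Trade.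

Lemma in_L_no_atoms (r x : rat) l : (forall a, ~ atom r a) -> in_L r x l -> l = 0%N.
Proof.
move=> no_atom [[|a s] [[atoms _] <-]] //.
by case: (no_atom a (atoms a (mem_head _ _))).
Qed.

Lemma finite_elasticity_eq1 (r q : rat) :
  (forall x lo hi, in_L r x lo -> in_L r x hi ->
     (forall l, in_L r x l -> (l <= hi)%N) -> lo = hi) ->
  finite_elasticity r q -> q = 1.
Proof.
move=> unique_len [x [_ [[_ ->] //|[x_neq0 [lo [hi [lo_x hi_x bounds ->]]]]]]].
rewrite -(unique_len x lo hi lo_x hi_x) => [|l /bounds /andP [] //].
rewrite divff // pnatr_eq0; apply: contra x_neq0 => /eqP lo0.
by move: lo_x; rewrite lo0 => [[s [[_ ->] /size0nil ->]]]; rewrite big_nil.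
Qed.

Lemma posrat_num_den (r : rat) : 0 < r ->
  [/\ r = (`|numq r|%N)%:R / (`|denq r|%N)%:R, coprime `|numq r| `|denq r|,
      (0 < `|numq r|)%N & (0 < `|denq r|)%N].
Proof.
move=> r_gt0; have num_gt0 : 0 < numq r by rewrite numq_gt0.
rewrite !absz_gt0 gt_eqF // gt_eqF ?denq_gt0 // coprime_num_den.
by rewrite !natr_absz !ger0_norm ?ltW ?denq_gt0 // divq_num_den.
Qed.

Section NumDen.
Variables (r : rat) (A B : nat).
Hypotheses (r_eq : r = A%:R / B%:R) (coprimeAB : coprime A B)
  (A_gt0 : (0 < A)%N) (B_gt0 : (0 < B)%N).

Let r_gt0 : 0 < r. Proof. by rewrite r_eq divr_gt0 ?ltr0n. Qed.

Lemma wsum_count_expsum e n : all (fun x => x < n.+1)%N e ->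
  (wsum A B (fun i => count_mem i e) n.+1)%:R = expsum r e * B%:R ^+ n.
Proof.
move=> lt_e; rewrite /expsum (big_count_mem _ lt_e) mulr_suml /wsum natr_sum.
apply: eq_bigr => i _; have : (i <= n)%N by rewrite -ltnS.
rewrite subSS r_eq expr_div_n -mulr_natl !natrM !natrX; move: (nat_of_ord i) => k le_kn.
rewrite -(subnKC le_kn) exprD addKn.
have Bk_neq0 : (B%:R : rat) ^+ k != 0 by rewrite expf_neq0 // pnatr_eq0 -lt0n.
by field.
Qed.

Lemma expsum_eq_wsum e e' : expsum r e = expsum r e' ->
  exists n, [/\ all (fun x => x < n.+1)%N e, all (fun x => x < n.+1)%N e'
    & wsum A B (fun i => count_mem i e) n.+1 = wsum A B (fun i => count_mem i e') n.+1].
Proof.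
move=> E; exists (sumn (e ++ e')).
have := all_lt_sumn (e ++ e'); rewrite all_cat => /andP [lt_e lt_e'].
by split=> //; apply/eqP; rewrite -(eqr_nat rat) !wsum_count_expsum // E.
Qed.

Lemma expsum_inj_small_counts e e' : expsum r e = expsum r e' ->
  small_counts A e -> small_counts A e' -> perm_eq e e'.
Proof.
move=> /expsum_eq_wsum [n [lt_e lt_e' E]] small small'.
by apply: perm_eq_count_lt lt_e lt_e' _; apply: wsum_injA E _.
Qed.

Lemma expsum_inj_small_pos_counts e e' : expsum r e = expsum r e' ->
  small_pos_counts B e -> small_pos_counts B e' -> perm_eq e e'.
Proof.
move=> /expsum_eq_wsum [n [lt_e lt_e' E]] small small'.
apply: perm_eq_count_lt lt_e lt_e' _; apply: wsum_injB E _ => // i i_gt0 _.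
by split; [apply: small | apply: small'].
Qed.

(* For [r > 1] the powers in a decomposition of [r ^+ k] are below [k], so clearing
   denominators would make [B] divide [A ^ k]. *)
Lemma atom_exp_gt1 k : 1 < r -> (1 < B)%N -> atom r (r ^+ k).
Proof.
move=> r_gt1 B_gt1; apply: atom_exp_indecomposable => // t size_t; apply/eqP => Et.
have lt_tk x : x \in t -> (x < k)%N.
  by move=> xt; rewrite -(ltr_eXn2l r_gt1) -Et exp_lt_expsum.
have lt_t : all (fun x => x < k.+1)%N t by apply/allP => x /lt_tk /ltnW.
have tk0 : count_mem k t = 0%N by apply/count_memPn/negP => /lt_tk; rewrite ltnn.
have : wsum A B (fun i => count_mem i t) k.+1 = wsum A B (fun i => count_mem i [:: k]) k.+1.
  by apply/eqP; rewrite -(eqr_nat rat) !wsum_count_expsum //= ?ltnSn // Et expsum_seq1.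
rewrite !wsum_recr tk0 /= eqxx addn0 addnC [RHS]addnC.
have coprimeBAk : coprime B (A ^ k) by rewrite coprimeXr // coprime_sym.
by move/(coprime_digit_eq (c := 0) (d := 1) coprimeBAk B_gt0 B_gt1).
Qed.

(* Dually, for [r < 1] dividing by [r ^+ k] leaves [1] as a sum of positive powers of
   [A / B], and clearing denominators would make [A] divide a power of [B]. *)
Lemma atom_exp_lt1 k : r < 1 -> (1 < A)%N -> atom r (r ^+ k).
Proof.
move=> r_lt1 A_gt1; apply: atom_exp_indecomposable => // t size_t; apply/eqP => Et.
have lt_kt x : x \in t -> (k < x)%N.
  by move=> xt; rewrite -(ltr_iXn2l r_gt0 r_lt1) -Et exp_lt_expsum.
set t' := map (subn^~ k) t.
have Et' : expsum r t' = r ^+ 0.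
  apply: (mulfI (x := r ^+ k)); first by rewrite expf_neq0 // gt_eqF.
  rewrite expr0 mulr1 -[RHS]Et /expsum big_map mulr_sumr big_seq [RHS]big_seq.
  by apply: eq_bigr => x /lt_kt lt_kx; rewrite -exprD subnKC // ltnW.
have t'_gt0 : 0 \notin t' by apply/mapP => -[x /lt_kt]; lia.
have [n [lt_t' _ E]] :=
  expsum_eq_wsum (e' := [:: 0%N]) (etrans Et' (esym (expsum_seq1 r 0))).
move: E; rewrite !wsum_recl (count_memPn t'_gt0) /=.
have coprimeABn : coprime A (B ^ n) by rewrite coprimeXr.
by move/(coprime_digit_eq (c := 0) (d := 1) coprimeABn A_gt0 A_gt1).
Qed.

End NumDen.

Section Lt1.
Variables (r : rat) (A B : nat).
Hypotheses (r_eq : r = A%:R / B%:R) (coprimeAB : coprime A B)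
  (A_gt0 : (0 < A)%N) (B_gt0 : (0 < B)%N) (r_lt1 : r < 1).

Let r_gt0 : 0 < r. Proof. by rewrite r_eq divr_gt0 ?ltr0n. Qed.

Let A_lt_B : (A < B)%N.
Proof. by move: r_lt1; rewrite r_eq ltr_pdivrMr ?ltr0n // mul1r ltr_nat. Qed.

Lemma expsum_lengthen (e : seq nat) k j : (A <= count_mem k e)%N ->
  exists e', expsum r e' = expsum r e /\ size e' = (size e + j * (B - A))%N.
Proof.
elim: j e k => [|j IH] e k le_A; first by exists e; rewrite mul0n addn0.
have le_size : (A <= size e)%N := leq_trans le_A (count_size _ _).
have [e1 [sum1 size1 le_B]] := expsum_trade_up r_eq B_gt0 le_A.
have [e2 [sum2 size2]] := IH e1 k.+1 (leq_trans (ltnW A_lt_B) le_B).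
by exists e2; rewrite sum2 sum1 size2 size1 mulSn; split=> //; lia.
Qed.

Lemma small_counts_of_bounded_lengths x M e : (1 < A)%N ->
  (forall l, in_L r x l -> (l <= M)%N) -> expsum r e = x -> small_counts A e.
Proof.
move=> A_gt1 bounded sum_e; have [[k le_A]|//] := small_countsPn e A_gt0.
have [e' [sum' size']] := expsum_lengthen M.+1 le_A.
have atoms k' : atom r (r ^+ k') := atom_exp_lt1 r_eq coprimeAB A_gt0 B_gt0 k' r_lt1 A_gt1.
have := expsum_in_L e' atoms; rewrite sum' sum_e size' mulSn => /bounded.
have := leq_pmulr M (_ : 0 < B - A)%N; lia.
Qed.

Lemma no_atoms_num1 : A = 1%N -> forall a, ~ atom r a.
Proof.
move=> A1 a a_atom; have [k a_eq] := atom_exp r_gt0 a_atom.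
have B_gt1 : (1 < B)%N by rewrite -A1.
case: a_atom => _ [_ indec]; rewrite {}a_eq in indec.
have [||||] := indec (r ^+ k.+1) ((B - 1)%:R * r ^+ k.+1).
- by exists [:: k.+1]; rewrite big_seq1.
- by exists (nseq (B - 1) k.+1); rewrite -expsum_nseq.
- have := num_exp_eq_den_expS r_eq B_gt0 k; rewrite A1 mul1r => ->.
  have B_eq : B = ((B - 1) + 1)%N by rewrite subnK // ltnW.
  by rewrite {1}B_eq natrD mulrDl mul1r addrC.
- by move/eqP; rewrite expf_eq0 gt_eqF ?andbF.
- move/eqP; rewrite mulf_eq0 expf_eq0 (gt_eqF r_gt0) andbF orbF pnatr_eq0.
  by rewrite subn_eq0 leqNgt B_gt1.
Qed.

Lemma finite_elasticity_lt1 q : finite_elasticity r q -> q = 1.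
Proof.
apply: finite_elasticity_eq1 => x lo hi lo_x hi_x bounded.
have [A1|A_gt1] : A = 1%N \/ (1 < A)%N by lia.
  have no_atoms := no_atoms_num1 A1.
  by rewrite (in_L_no_atoms no_atoms lo_x) (in_L_no_atoms no_atoms hi_x).
have [e [<- sum_e]] := in_L_expsum r_gt0 lo_x.
have [e' [<- sum_e']] := in_L_expsum r_gt0 hi_x.
apply/perm_size/(expsum_inj_small_counts r_eq coprimeAB A_gt0 B_gt0).
- by rewrite sum_e sum_e'.
- exact: small_counts_of_bounded_lengths A_gt1 bounded sum_e.
- exact: small_counts_of_bounded_lengths A_gt1 bounded sum_e'.
Qed.

End Lt1.

Section Integer.
Variables (r : rat) (n : nat).
Hypotheses (r_eq : r = n%:R) (n_gt0 : (0 < n)%N).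

Lemma atom_int a : atom r a -> a = 1.
Proof.
have r_gt0 : 0 < r by rewrite r_eq ltr0n.
move=> a_atom; have [k a_eq] := atom_exp r_gt0 a_atom.
have [N a_N] : exists N, a = N%:R by exists (n ^ k)%N; rewrite a_eq r_eq natrX.
case: a_atom => _ [a_neq0 indec].
have [N_le1|N_gt1] := leqP N 1.
  by move: a_neq0; rewrite a_N; case: N {a_N} N_le1 => [|[|]] //; rewrite eqxx.
have [||||] := indec 1 N.-1%:R.
- by exists [:: 0%N]; rewrite big_seq1.
- by exists (nseq N.-1 0%N); have := expsum_nseq r N.-1 0; rewrite expr0 mulr1.
- by rewrite a_N addrC natr1 prednK // ltnW.
- by move/eqP; rewrite oner_eq0.
- by move/eqP; rewrite pnatr_eq0; lia.
Qed.

Lemma in_L_int x l : in_L r x l -> x = l%:R.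
Proof.
case=> s [[atoms ->] <-]; elim: s atoms => [|a s IH] atoms; first by rewrite big_nil.
rewrite big_cons (atom_int (atoms a (mem_head _ _))) IH; first by rewrite addrC natr1.
by move=> b bs; apply: atoms; rewrite inE bs orbT.
Qed.

Lemma finite_elasticity_int q : finite_elasticity r q -> q = 1.
Proof.
apply: finite_elasticity_eq1 => x lo hi lo_x hi_x _; apply/eqP.
by rewrite -(eqr_nat rat) -(in_L_int lo_x) -(in_L_int hi_x).
Qed.

End Integer.

Definition natfrac (a b : nat) : rat := a%:R / b%:R.

Section Gt1.
Variables (r : rat) (A B : nat).
Hypotheses (r_eq : r = A%:R / B%:R) (coprimeAB : coprime A B)
  (B_gt1 : (1 < B)%N) (B_lt_A : (B < A)%N).

Let B_gt0 : (0 < B)%N. Proof. exact: ltnW. Qed.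
Let A_gt0 : (0 < A)%N. Proof. exact: ltn_trans B_gt0 B_lt_A. Qed.
Let r_gt0 : 0 < r. Proof. by rewrite r_eq divr_gt0 ?ltr0n. Qed.
Let r_gt1 : 1 < r. Proof. by rewrite r_eq ltr_pdivlMr ?ltr0n // mul1r ltr_nat. Qed.
Let atoms k : atom r (r ^+ k) := atom_exp_gt1 r_eq coprimeAB A_gt0 B_gt0 k r_gt1 B_gt1.

Lemma reduce_small_counts e :
  exists f, [/\ expsum r f = expsum r e, (size f <= size e)%N & small_counts A f].
Proof.
have [n] := ubnP (size e); elim: n e => // n IH e /ltnSE le_en.
have [[k le_A]|small] := small_countsPn e A_gt0; last by exists e.
have le_size : (A <= size e)%N := leq_trans le_A (count_size _ _).
have [e1 [sum1 size1 _]] := expsum_trade_up r_eq B_gt0 le_A.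
have [|f [sumf sizef smallf]] := IH e1; first by rewrite size1; lia.
by exists f; rewrite sumf sum1; split=> //; rewrite (leq_trans sizef) // size1; lia.
Qed.

Lemma reduce_small_pos_counts M e :
  (forall e', expsum r e' = expsum r e -> (size e' <= M)%N) ->
  exists g, [/\ expsum r g = expsum r e, (size e <= size g)%N & small_pos_counts B g].
Proof.
have [d] := ubnP (M - size e); elim: d e => // d IH e /ltnSE le_d bounded.
have [[k le_B]|small] := small_pos_countsPn e B_gt0; last by exists e.
have le_size : (B <= size e)%N := leq_trans le_B (count_size _ _).
have [e1 [sum1 size1 _]] := expsum_trade_down r_eq B_gt0 le_B.
have := bounded e1 sum1; rewrite size1 => le_M.
have [|g [sumg sizeg smallg]] := IH e1 _ (fun e' E => bounded e' (etrans E sum1)).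
  by rewrite size1; lia.
by exists g; rewrite sumg sum1; split=> //; rewrite (leq_trans _ sizeg) // size1; lia.
Qed.

Lemma size_le_sum_expn e e' :
  expsum r e' = expsum r e -> (size e' <= \sum_(k <- e) A ^ k)%N.
Proof.
move=> E; rewrite -(ler_nat rat); apply: (@le_trans _ _ (expsum r e')).
  elim: e' {E} => [|k e' IH]; first by rewrite /expsum big_nil.
  by rewrite expsum_cons /= -natr1 addrC lerD // exprn_ege1 // ltW.
rewrite E natr_sum; apply: ler_sum => k _.
rewrite natrX lerXn2r ?nnegrE ?ler0n ?(ltW r_gt0) //.
by rewrite r_eq ler_pdivrMr ?ltr0n // ler_peMr ?ler0n // ler1n.
Qed.

(* The [A]-reduced expansion realises the least length and the [B]-reduced one the
   greatest; both are unique up to permutation. *)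
Lemma finite_elasticity_reduced f g : f != [::] -> expsum r f = expsum r g ->
  small_counts A f -> small_pos_counts B g ->
  finite_elasticity r (natfrac (size g) (size f)).
Proof.
move=> f_nil fg small_f small_g; exists (expsum r g); split; first by exists g.
right; split; first by rewrite -fg gt_eqF ?expsum_gt0.
exists (size f), (size g); split=> //; first by rewrite -fg; apply: expsum_in_L.
  exact: expsum_in_L.
move=> l /(in_L_expsum r_gt0) [e [<- sum_e]].
have [f' [sum_f' size_f' small_f']] := reduce_small_counts e.
have [g' [sum_g' size_g' small_g']] :=
  reduce_small_pos_counts (fun e' E => size_le_sum_expn (etrans E sum_e)).
have perm_f := expsum_inj_small_counts r_eq coprimeAB A_gt0 B_gt0 _ small_f small_f'.
have perm_g := expsum_inj_small_pos_counts r_eq coprimeAB B_gt0 _ small_g small_g'.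
rewrite (perm_size (perm_f _)) ?(perm_size (perm_g _)) ?size_f' ?size_g' //.
  by rewrite sum_g' sum_e.
by rewrite sum_f' sum_e fg.
Qed.

Lemma finite_elasticity_family K m : (0 < K)%N -> exists g0, (g0 <= K * B ^ m)%N /\
  forall s, finite_elasticity r (natfrac (K * A ^ m + s) (g0 + s)).
Proof.
move=> K_gt0; set N := (K * A ^ m)%N.
have N_gt0 : (0 < N)%N by rewrite muln_gt0 K_gt0 expn_gt0 A_gt0.
have sumN : expsum r (nseq (K * B ^ m) m) = N%:R.
  rewrite expsum_nseq r_eq expr_div_n /N !natrM !natrX.
  by field; rewrite expf_neq0 // pnatr_eq0 -lt0n.
have [f [sum_f size_f small_f]] := reduce_small_counts (nseq (K * B ^ m) m).
exists (size f); split=> [|s]; first by rewrite size_nseq in size_f.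
have f_nil : f != [::].
  apply/eqP => f0; move: sum_f; rewrite f0 sumN /expsum big_nil => /esym/eqP.
  by rewrite pnatr_eq0 gtn_eqF.
set H := (sumn f).+1.
have := @finite_elasticity_reduced (f ++ iota H s) (nseq N 0 ++ iota H s).
rewrite !size_cat size_nseq size_iota; apply.
- by case: (f) f_nil.
- by rewrite !expsum_cat sum_f sumN expsum_nseq expr0 mulr1.
- apply: small_counts_cat_iota (ltn_trans B_gt1 B_lt_A) small_f _.
  exact/allP/all_lt_sumn.
- exact: small_pos_counts_nseq0_cat_iota.
Qed.

Lemma finite_elasticity_ratios P K : exists D g : nat,
  [/\ (K <= D)%N, (P * g <= D)%N
    & forall k, (g < k)%N -> finite_elasticity r (natfrac (D + k) k)].
Proof.
have [m grow] := expn_ratio_unbounded P.+1 B_gt0 B_lt_A.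
have [g [le_g family]] := finite_elasticity_family m (ltn0Sn K).
have Bm_gt0 : (0 < B ^ m)%N by rewrite expn_gt0 B_gt0.
move: grow le_g; set X := (A ^ m)%N; set Y := (B ^ m)%N => grow le_g.
have le_Pg : (P.+1 * g <= K.+1 * (P.+1 * Y))%N by rewrite mulnCA leq_mul2l le_g orbT.
have le_K : (K.+1 <= K.+1 * Y)%N by rewrite leq_pmulr.
have le_X : (K.+1 * (P.+1 * Y) + K.+1 * Y <= K.+1 * X)%N.
  by rewrite -mulnDr leq_mul2l -mulSnr grow orbT.
exists (K.+1 * X - g)%N, g; split; [lia | lia |].
move=> k lt_gk; have := family (k - g)%N; rewrite subnKC ?(ltnW lt_gk) //.
suff -> : (K.+1 * X - g + k = K.+1 * X + (k - g))%N by [].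
lia.
Qed.

End Gt1.

Lemma finite_elasticity_trivial (r q : rat) : 0 < r ->
  r <= 1 \/ (exists n : nat, r = n%:R) -> finite_elasticity r q -> q = 1.
Proof.
move=> r_gt0; have [r_eq coprimeAB A_gt0 B_gt0] := posrat_num_den r_gt0.
case=> [r_le1|[n r_n]].
  have [r_lt1|r_ge1] := ltrP r 1.
    exact: (finite_elasticity_lt1 r_eq coprimeAB A_gt0 B_gt0 r_lt1).
  have r1 : r = 1 by apply/eqP; rewrite eq_le r_le1 r_ge1.
  exact: (@finite_elasticity_int r 1).
have n_gt0 : (0 < n)%N by rewrite -(ltr0n rat) -r_n.
exact: (finite_elasticity_int r_n n_gt0).
Qed.

Lemma finite_elasticity1 (r : rat) : finite_elasticity r 1.
Proof. by exists 0; split; [exists [::]; rewrite big_nil | left]. Qed.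

Lemma natfrac_num_den a b : (0 < b)%N -> exists n d : nat,
  [/\ numq (natfrac a b) = n, denq (natfrac a b) = d, (0 < d)%N & (n * b = a * d)%N].
Proof.
move=> b_gt0; set q := natfrac a b.
have num_ge0 : 0 <= numq q by rewrite numq_ge0 divr_ge0 ?ler0n.
have den_ge0 : 0 <= denq q by rewrite ltW ?denq_gt0.
exists `|numq q|%N, `|denq q|%N; rewrite !gez0_abs //.
split=> //; first by rewrite absz_gt0 denq_neq0.
apply/eqP; rewrite -(eqr_nat rat) !natrM !natr_absz !ger0_norm //.
by rewrite numqE /q /natfrac mulrAC divfK ?pnatr_eq0 -?lt0n.
Qed.

From Stdlib Require Import Reals Lra ZArith.
Local Open Scope R_scope.

Lemma rat_to_R_natfrac (a b : nat) : (0 < b)%nat -> rat_to_R (natfrac a b) = INR a / INR b.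
Proof.
move=> b_gt0; have [n [d [num_q den_q d_gt0 /(f_equal INR) E]]] := natfrac_num_den a b_gt0.
rewrite /rat_to_R num_q den_q /= -!INR_IZR_INZ; rewrite !mult_INR in E.
have b_neq0 : INR b <> 0 by apply: not_0_INR; lia.
have d_neq0 : INR d <> 0 by apply: not_0_INR; lia.
by field_simplify_eq; [lra | split].
Qed.

Lemma rat_to_R1 : rat_to_R 1%Q = 1.
Proof. by rewrite /rat_to_R /=; lra. Qed.

Lemma not_dense_ge1_of_eq1 (E : rat -> Prop) :
  (forall q, E q -> q = 1%Q) -> ~ dense_in_R_ge1 E.
Proof.
move=> eq1 dense; have [q [/eq1 -> close]] := dense 2 1 ltac:(lra) ltac:(lra).
by move: close; rewrite rat_to_R1 Rabs_left; lra.
Qed.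

Lemma archimed_nat (z : R) : 0 < z -> exists n : nat, z < INR n <= z + 1.
Proof.
move=> z_gt0; have [lt_up le_up] := archimed z.
have up_ge0 : (0 <= up z)%Z by apply: le_IZR; lra.
by exists (Z.to_nat (up z)); rewrite INR_IZR_INZ Z2Nat.id //; lra.
Qed.

(* With [c = p - 1] and [c k] within [c] above [D], the error of [1 + D / k] is at most
   [c ^ 2 / D]. *)
Lemma ratio_approx (p eps D k : R) : 1 + eps <= p -> 0 < eps ->
  (p - 1) * (p - 1) / eps < D -> D / (p - 1) < k <= D / (p - 1) + 1 ->
  Rabs ((D + k) / k - p) < eps.
Proof.
move=> le_p eps_gt0; set c := p - 1 => lt_D [lt_k le_k].
have c_gt0 : 0 < c by rewrite /c; lra.
have D_gt0 : 0 < D by apply: Rle_lt_trans lt_D; apply: Rlt_le; apply: Rdiv_lt_0_compat; nra.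
have lt_ck : D < c * k.
  by move: lt_k => /(Rmult_lt_compat_l c); rewrite /Rdiv -Rmult_assoc Rinv_r_simpl_m; lra.
have le_ck : c * k <= D + c.
  move: le_k => /(Rmult_le_compat_l c).
  by rewrite /Rdiv Rmult_plus_distr_l -Rmult_assoc Rinv_r_simpl_m; lra.
have lt_cc : c * c < eps * D.
  move: lt_D => /(Rmult_lt_compat_l eps).
  by rewrite /Rdiv Rmult_comm Rmult_assoc Rinv_l; lra.
have k_gt0 : 0 < k by nra.
have -> : (D + k) / k - p = (D - c * k) / k by rewrite /c; field; lra.
rewrite Rabs_left; last by apply: Rdiv_neg_pos; lra.
apply: (Rmult_lt_reg_r k) => //.
rewrite (_ : - ((D - c * k) / k) * k = c * k - D); last by field; lra.
nra.
Qed.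

Lemma dense_ge1_of_ratios (E : rat -> Prop) : E 1%Q ->
  (forall P K : nat, exists D g : nat,
     [/\ (K <= D)%nat, (P * g <= D)%nat
        & forall k, (g < k)%nat -> E (natfrac (D + k) k)]) ->
  dense_in_R_ge1 E.
Proof.
move=> E1 ratios p eps p_ge1 eps_gt0.
have [lt_eps|le_eps] := Rlt_or_le (p - 1) eps.
  by exists 1%Q; split=> //; rewrite rat_to_R1; apply: Rabs_def1; lra.
have [P [lt_pP _]] := @archimed_nat p ltac:(lra).
have c2_gt0 : 0 < (p - 1) * (p - 1) / eps by apply: Rdiv_lt_0_compat; nra.
have [K [lt_K _]] := archimed_nat c2_gt0.
have [D [g [/ssrnat.leP/le_INR le_KD le_gD_nat ratios_E]]] := ratios P K.
have le_gD : INR P * INR g <= INR D.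
  by rewrite -mult_INR; apply/le_INR/ssrnat.leP; rewrite multE.
have g_ge0 := pos_INR g.
have [k [lt_k le_k]] := @archimed_nat (INR D / (p - 1)) ltac:(apply: Rdiv_lt_0_compat; lra).
have lt_gk : (g < k)%nat.
  apply/ssrnat.ltP/INR_lt/(Rle_lt_trans _ _ _ _ lt_k).
  apply: (Rmult_le_reg_l (p - 1)); first lra.
  rewrite /Rdiv -Rmult_assoc Rinv_r_simpl_m; nra.
exists (natfrac (D + k) k); split; first exact: ratios_E.
rewrite rat_to_R_natfrac ?plus_INR; last lia.
by apply: ratio_approx => //; lra.
Qed.

Local Open Scope ring_scope.

Theorem corollary4p6 (r : rat) (hr : 0 < r) (hat : atomic r) :
  dense_in_R_ge1 (finite_elasticity r) <->
  (1 < r /\ ~ (exists n : nat, r = n%:R)).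
Proof.
split=> [dense|[r_gt1 r_nint]].
  have nontrivial : ~ (r <= 1 \/ exists n : nat, r = n%:R).
    move=> cases; apply: (not_dense_ge1_of_eq1 _ dense) => q.
    by move/(finite_elasticity_trivial hr cases) ->.
  split; first by rewrite ltNge; apply/negP => r_le1; apply: nontrivial; left.
  by move=> r_int; apply: nontrivial; right.
move: (posrat_num_den hr); set A := `|numq r|%nat; set B := `|denq r|%nat.
case=> r_eq coprimeAB A_gt0 B_gt0.
have B_gt1 : (1 < B)%nat.
  rewrite ltn_neqAle B_gt0 andbT; apply/eqP => B1.
  by apply: r_nint; exists A; rewrite r_eq -B1 divr1.
have B_lt_A : (B < A)%nat.
  by move: r_gt1; rewrite r_eq ltr_pdivlMr ?ltr0n // mul1r ltr_nat.
apply: dense_ge1_of_ratios (finite_elasticity1 r) _.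
exact: finite_elasticity_ratios r_eq coprimeAB B_gt1 B_lt_A.
Qed.
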